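(* Let $T>0$, $M$ and $N$ be positive integers, $\tau=T/M$, $t_k=k\tau$ ($k=0,\dots,M$), $h=1/N$ and $x_r=rh$ ($r=0,\dots,N$). Let $u:\Omega=[0,1]\times[0,T]\to\mathbb{R}$ be such that $\partial_x^3 u$ is continuous on $\Omega$, and write $u_{k}(x)=u(x,t_{k})$. Let $0<\gamma<1$ and $0\le k\le M-1$. For an integer $m\ge 1$ and $\eta>0$ put $c^{\eta}_m=\frac{(m-1)^{\eta}-m^{\eta}}{\eta}$, and set $\nu_h^{\gamma}=\frac{h^{1-\gamma}}{\Gamma(1-\gamma)}$. For $1\le r\le N-1$ define the weights $w^{\gamma}_{j,r}$, $j=0,\dots,r$, by \[ w^{\gamma}_{j,r}=\tilde w^{\gamma}_{j-1,0}-\tilde w^{\gamma}_{j,1}, \] where $\tilde w^{\gamma}_{-1,0}=0$, $\tilde w^{\gamma}_{r,1}=0$, and for $\rho\in\{0,1\}$ and $m=1,\dots,r$, \[ \tilde w^{\gamma}_{r-m,\rho}=c^{2-\gamma}_{m}-(m-\rho)\,c^{1-\gamma}_{m}. \] Then for $r=1,\dots,N-1$, \[ D_x^{\gamma}u_{k+1}(x_r)=\nu_h^{\gamma}\sum_{j=0}^{r}w^{\gamma}_{j,r}\,u_{k+1}'(x_j)+R_h^{\gamma}(r), \] where the remainder satisfies \[ \|R_h^{\gamma}\|_{\infty}\le\frac{h^{2}\bar{\mathcal{M}}_u}{8\,\Gamma(2-\gamma)},\qquad \bar{\mathcal{M}}_u=\sup_{(x,t)\in\Omega}\Big|\frac{\partial^3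 u}{\partial x^3}(x,t)\Big|. \]
   Context: For $0<\gamma<1$, the Caputo derivative in $x$ is $D_x^{\gamma}f(x)=\frac{1}{\Gamma(1-\gamma)}\int_0^{x}(x-s)^{-\gamma}f'(s)\,ds$ for $x>0$. Here $u_{k+1}'$ denotes the first derivative of $x\mapsto u(x,t_{k+1})$, and $\|R_h^\gamma\|_\infty$ denotes the maximum of $|R_h^\gamma(r)|$ over $r=1,\dots,N-1$. *)

From Stdlib Require Import Reals Lra Lia.
From Coquelicot Require Import Coquelicot.
Open Scope R_scope.

(* x^y with the convention 0^y = 0 (and = 0 for x <= 0); Stdlib's Rpower 0 y = 1. *)
Definition pw (x y : R) : R := if Rlt_dec 0 x then Rpower x y else 0.

Definition Gamma (z : R) : R :=
  RInt_gen (fun t => pw t (z - 1) * exp (- t)) (at_right 0) (Rbar_locally p_infty).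

Definition is_deriv_on (a b : R) (f f' : R -> R) : Prop :=
  forall x, a <= x <= b ->
    filterlim (fun y => (f y - f x) / (y - x))
      (within (fun y => a <= y <= b /\ y <> x) (locally x)) (locally (f' x)).

Definition continuous_on_Omega (T : R) (g : R -> R -> R) : Prop :=
  forall x t, 0 <= x <= 1 -> 0 <= t <= T ->
  forall eps : posreal, exists delta : posreal, forall y s,
    0 <= y <= 1 -> 0 <= s <= T -> Rabs (y - x) < delta -> Rabs (s - t) < delta ->
    Rabs (g y s - g x t) < eps.

(* Caputo derivative of order gamma at x > 0 of a function whose derivative is df:
   (1/Gamma(1-gamma)) * int_0^x (x-s)^(-gamma) df(s) ds  (improper at s = x). *)
Definition caputo (gamma : R) (df : R -> R) (x : R) : R :=
  / Gamma (1 - gamma) *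
  RInt_gen (fun s => pw (x - s) (- gamma) * df s) (at_point 0) (at_left x).

Definition cc (eta : R) (m : nat) : R := (pw (INR m - 1) eta - pw (INR m) eta) / eta.

(* wtilde^gamma_{i,rho} for 0 <= i <= r-1, i.e. m = r - i *)
Definition wtil (gamma : R) (r : nat) (rho : R) (i : nat) : R :=
  cc (2 - gamma) (r - i) - (INR (r - i) - rho) * cc (1 - gamma) (r - i).

Definition wgt (gamma : R) (j r : nat) : R :=
  (if Nat.eqb j 0 then 0 else wtil gamma r 0 (j - 1))
  - (if Nat.eqb j r then 0 else wtil gamma r 1 j).

Definition Mbar (T : R) (u3 : R -> R -> R) : R :=
  real (Lub_Rbar (fun z => exists x t, 0 <= x <= 1 /\ 0 <= t <= T /\ z = Rabs (u3 x t))).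

(* On each cell [x_j, x_(j+1)] replace u'_(k+1) by its linear interpolant. Against the kernel
   (x_r - s)^(-gamma) a linear function integrates in closed form, and summing these exact cell
   integrals and regrouping them by nodes gives nu_h^gamma * sum_j w_(j,r) u'(x_j). The
   interpolation error is at most h^2 Mbar / 8 on every cell, so the remainder is at most
   (h^2 Mbar / 8) * x_r^(1-gamma) / ((1 - gamma) Gamma(1 - gamma)) <= h^2 Mbar / (8 Gamma(2 - gamma)),
   by the recurrence Gamma(2 - gamma) = (1 - gamma) Gamma(1 - gamma). *)

From Stdlib Require Import Reals Lra Lia ClassicalEpsilon Classical.
From Coquelicot Require Import Coquelicot.
Open Scope R_scope.

(** * Real powers *)

Lemma pw_pos x p : 0 < x -> pw x p = Rpower x p.
Proof. intros Hx. unfold pw. destruct (Rlt_dec 0 x); [reflexivity | lra]. Qed.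

Lemma pw_nonpos x p : x <= 0 -> pw x p = 0.
Proof. intros Hx. unfold pw. destruct (Rlt_dec 0 x); [lra | reflexivity]. Qed.

Lemma pw_ge0 x p : 0 <= pw x p.
Proof. unfold pw. destruct (Rlt_dec 0 x); [left; apply exp_pos | lra]. Qed.

Lemma pw_0_r x : 0 < x -> pw x 0 = 1.
Proof. intros Hx. rewrite pw_pos by exact Hx. apply Rpower_O, Hx. Qed.

Lemma pw_1_r x : 0 < x -> pw x 1 = x.
Proof. intros Hx. rewrite pw_pos by exact Hx. apply Rpower_1, Hx. Qed.

Lemma pw_1_l p : pw 1 p = 1.
Proof. rewrite pw_pos by lra. unfold Rpower. rewrite ln_1, Rmult_0_r. apply exp_0. Qed.

Lemma pw_plus_1 x p : 0 < x -> pw x (p + 1) = x * pw x p.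
Proof.
intros Hx. rewrite !pw_pos by exact Hx. rewrite Rpower_plus, Rpower_1 by exact Hx. ring.
Qed.

Lemma pw_mul x y p : 0 <= x -> 0 < y -> pw (x * y) p = pw x p * Rpower y p.
Proof.
intros Hx Hy. destruct (Req_dec x 0) as [->|Hx0].
- rewrite Rmult_0_l, !pw_nonpos by lra. ring.
- rewrite !pw_pos by nra. symmetry. apply Rpower_mult_distr; lra.
Qed.

Lemma pw_le_compat_l x y p : 0 <= p -> x <= y -> pw x p <= pw y p.
Proof.
intros Hp Hxy. destruct (Rle_lt_dec x 0) as [Hx|Hx].
- rewrite (pw_nonpos x) by exact Hx. apply pw_ge0.
- rewrite !pw_pos by lra. apply Rle_Rpower_l; lra.
Qed.

Lemma pw_le_compat_r x p q : 1 <= x -> p <= q -> pw x p <= pw x q.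
Proof. intros Hx Hpq. rewrite !pw_pos by lra. apply Rle_Rpower; assumption. Qed.

Lemma pw_small p : 0 < p -> forall eps : posreal, exists d : posreal,
  forall z, z < d -> pw z p < eps.
Proof.
intros Hp eps. assert (Hd : 0 < Rpower eps (/ p)) by apply exp_pos.
exists (mkposreal _ Hd). intros z Hz. simpl in Hz.
destruct (Rle_lt_dec z 0) as [Hz0|Hz0].
- rewrite pw_nonpos by exact Hz0. apply cond_pos.
- rewrite pw_pos by exact Hz0.
  replace (pos eps) with (Rpower (Rpower eps (/ p)) p)
    by (rewrite Rpower_mult, Rinv_l, Rpower_1; [reflexivity | apply cond_pos | lra]).
  apply Rlt_Rpower_l; lra.
Qed.

Lemma is_derive_pw x p : 0 < x -> is_derive (fun t => pw t p) x (p * pw x (p - 1)).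
Proof.
intros Hx. rewrite pw_pos by exact Hx.
apply (is_derive_ext_loc (fun t => Rpower t p)).
- exists (mkposreal x Hx). intros y Hy. change (Rabs (y - x) < x) in Hy.
  apply Rabs_def2 in Hy. rewrite pw_pos by lra. reflexivity.
- apply is_derive_Reals, derivable_pt_lim_power, Hx.
Qed.

Lemma continuous_pw_of_pos x p : 0 < x -> continuous (fun t => pw t p) x.
Proof.
intros Hx. apply (ex_derive_continuous (K := R_AbsRing) (V := R_NormedModule)).
eexists. apply is_derive_pw, Hx.
Qed.

Lemma continuous_pw_of_exp_pos x p : 0 < p -> continuous (fun t => pw t p) x.
Proof.
intros Hp. destruct (Rlt_le_dec 0 x) as [Hx|Hx]; [apply continuous_pw_of_pos, Hx|].
intros P [eps HP]. destruct (pw_small p Hp eps) as [d Hd].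
exists d. intros y Hy. apply HP. change (Rabs (y - x) < d) in Hy. apply Rabs_def2 in Hy.
change (Rabs (pw y p - pw x p) < eps).
rewrite (pw_nonpos x) by exact Hx. rewrite Rminus_0_r, Rabs_pos_eq by apply pw_ge0.
apply Hd. simpl in Hy. lra.
Qed.

Lemma is_derive_pw_sub c s p : s < c ->
  is_derive (fun t => pw (c - t) p) s (- (p * pw (c - s) (p - 1))).
Proof.
intros Hs. replace (- (p * pw (c - s) (p - 1))) with (scal (-1) (p * pw (c - s) (p - 1)))
  by (unfold scal; simpl; unfold mult; simpl; ring).
apply (is_derive_comp (fun t => pw t p) (fun t => c - t)).
- apply is_derive_pw. lra.
- auto_derive; [easy | ring].
Qed.

Lemma continuous_pw_sub_of_lt c s p : s < c -> continuous (fun t => pw (c - t) p) s.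
Proof.
intros Hs. apply (ex_derive_continuous (K := R_AbsRing) (V := R_NormedModule)).
eexists. apply is_derive_pw_sub, Hs.
Qed.

Lemma continuous_pw_sub_of_exp_pos c p y : 0 < p -> continuous (fun t => pw (c - t) p) y.
Proof.
intros Hp. apply (continuous_comp (fun t => c - t) (fun t => pw t p)).
- apply (ex_derive_continuous (K := R_AbsRing) (V := R_NormedModule)). auto_derive. easy.
- apply continuous_pw_of_exp_pos, Hp.
Qed.

Lemma is_RInt_pw p u v : 0 < u -> 0 < v -> p + 1 <> 0 ->
  is_RInt (fun t => pw t p) u v ((pw v (p + 1) - pw u (p + 1)) / (p + 1)).
Proof.
intros Hu Hv Hp.
replace ((pw v (p + 1) - pw u (p + 1)) / (p + 1))
  with (minus (/ (p + 1) * pw v (p + 1)) (/ (p + 1) * pw u (p + 1)))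
  by (unfold minus, plus, opp; simpl; field; exact Hp).
apply (is_RInt_derive (fun t => / (p + 1) * pw t (p + 1))); intros x Hx;
  assert (0 < x) by (pose proof (Rmin_glb_lt u v 0); lra).
- replace (pw x p) with (/ (p + 1) * ((p + 1) * pw x (p + 1 - 1)))
    by (replace (p + 1 - 1) with p by ring; field; exact Hp).
  apply is_derive_scal, is_derive_pw. lra.
- apply continuous_pw_of_pos. lra.
Qed.

Lemma is_RInt_pw_sub c p a y : a < c -> y < c -> p + 1 <> 0 ->
  is_RInt (fun s => pw (c - s) p) a y ((pw (c - a) (p + 1) - pw (c - y) (p + 1)) / (p + 1)).
Proof.
intros Ha Hy Hp.
replace ((pw (c - a) (p + 1) - pw (c - y) (p + 1)) / (p + 1))
  with (minus (- / (p + 1) * pw (c - y) (p + 1)) (- / (p + 1) * pw (c - a) (p + 1)))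
  by (unfold minus, plus, opp; simpl; field; exact Hp).
apply (is_RInt_derive (fun s => - / (p + 1) * pw (c - s) (p + 1))); intros x Hx;
  assert (x < c) by (pose proof (Rmax_lub_lt a y c); lra).
- replace (pw (c - x) p) with (- / (p + 1) * (- ((p + 1) * pw (c - x) (p + 1 - 1))))
    by (replace (p + 1 - 1) with p by ring; field; exact Hp).
  apply is_derive_scal, is_derive_pw_sub. lra.
- apply continuous_pw_sub_of_lt. lra.
Qed.

(** * Improper integrals *)

Lemma abs_RInt_le_primitive (f k K : R -> R) u v :
  ex_RInt f u v -> (forall x, Rmin u v <= x <= Rmax u v -> Rabs (f x) <= k x) ->
  is_RInt k u v (K v - K u) -> Rabs (RInt f u v) <= Rabs (K v - K u).
Proof.
intros Hf Hfk Hk. destruct (Rle_lt_dec u v) as [Huv|Hvu].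
- eapply Rle_trans; [|apply Rle_abs].
  apply (norm_RInt_le f k u v _ _ Huv);
    [| apply (RInt_correct (V := R_CompleteNormedModule)), Hf | exact Hk].
  intros x Hx. apply Hfk. rewrite Rmin_left, Rmax_right; lra.
- rewrite <- opp_RInt_swap by (apply ex_RInt_swap, Hf). rewrite Rabs_minus_sym.
  change (Rabs (- RInt f v u) <= Rabs (K u - K v)). rewrite Rabs_Ropp.
  eapply Rle_trans; [|apply Rle_abs].
  apply (norm_RInt_le f k v u _ _ (Rlt_le _ _ Hvu)).
  + intros x Hx. apply Hfk. rewrite Rmin_right, Rmax_left; lra.
  + apply (RInt_correct (V := R_CompleteNormedModule)), ex_RInt_swap, Hf.
  + replace (K u - K v) with (opp (K v - K u)) by (unfold opp; simpl; ring).
    apply (is_RInt_swap (V := R_NormedModule)), Hk.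
Qed.

Lemma is_RInt_gen_from_point {F} {FF : Filter F} (f : R -> R) a l :
  F (fun y => ex_RInt f a y) -> filterlim (fun y => RInt f a y) F (locally l) ->
  is_RInt_gen f (at_point a) F l.
Proof.
intros Hex Hl P HP.
apply (Filter_prod _ _ _ (fun x => x = a) (fun y => ex_RInt f a y /\ P (RInt f a y))).
- reflexivity.
- apply filter_and; [exact Hex | exact (Hl P HP)].
- intros x y -> [Hy HPy]. exists (RInt f a y). split; [| exact HPy].
  apply (RInt_correct (V := R_CompleteNormedModule)), Hy.
Qed.

Lemma is_RInt_gen_to_point {F} {FF : Filter F} (f : R -> R) b l :
  F (fun y => ex_RInt f b y) -> filterlim (fun y => RInt f b y) F (locally l) ->
  is_RInt_gen f F (at_point b) (- l).
Proof.
intros Hex Hl P HP.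
assert (Hopp := filterlim_comp _ _ _ _ _ _ _ _ Hl (filterlim_opp (K := R_AbsRing) l) P HP).
apply (Filter_prod _ _ _ (fun y => ex_RInt f b y /\ P (opp (RInt f b y))) (fun x => x = b)).
- apply filter_and; [exact Hex | exact Hopp].
- reflexivity.
- intros y x [Hy HPy] ->. exists (opp (RInt f b y)). split; [|exact HPy].
  apply (is_RInt_swap (V := R_CompleteNormedModule)).
  apply (RInt_correct (V := R_CompleteNormedModule)), Hy.
Qed.

Lemma RInt_cvg_of_dominated {F} {FF : ProperFilter F} (f K : R -> R) a (P : R -> Prop) :
  F P -> (forall u, P u -> ex_RInt f a u) -> (forall u v, P u -> P v -> ex_RInt f u v) ->
  (forall u v, P u -> P v -> Rabs (RInt f u v) <= Rabs (K v - K u)) ->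
  (exists l, filterlim K F (locally l)) ->
  exists l, filterlim (fun y => RInt f a y) F (locally l).
Proof.
intros HP Hexa Hex Hdom HK. apply filterlim_locally_cauchy. intros eps.
destruct (proj2 (filterlim_locally_cauchy K) HK eps) as [Q [HQ HQK]].
exists (fun y => P y /\ Q y). split; [apply filter_and; assumption|].
intros u v [Pu Qu] [Pv Qv]. change (Rabs (RInt f a v - RInt f a u) < eps).
rewrite <- (RInt_Chasles f a u v) by auto.
change (Rabs (RInt f a u + RInt f u v - RInt f a u) < eps).
rewrite Rplus_comm. unfold Rminus. rewrite Rplus_assoc, Rplus_opp_r, Rplus_0_r.
eapply Rle_lt_trans; [apply Hdom; assumption | exact (HQK u v Qu Qv)].
Qed.

(** * The Gamma function *)

Lemma exp_neg_le_1 t : 0 <= t -> exp (- t) <= 1.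
Proof.
intros Ht. rewrite <- exp_0. destruct (Req_dec t 0) as [->|Ht0].
- rewrite Ropp_0. apply Rle_refl.
- left. apply exp_increasing. lra.
Qed.

Lemma mult_exp_neg_lt t : 0 < t -> t * exp (- t) < 4 / t.
Proof.
intros Ht. rewrite exp_Ropp.
assert (Hsq : t * t / 4 < exp t).
{ replace (exp t) with (exp (t / 2) * exp (t / 2)) by (rewrite <- exp_plus; f_equal; field).
  pose proof (exp_ineq1_le (t / 2)). nra. }
pose proof (exp_pos t).
apply (Rmult_lt_reg_r (exp t * t)); [nra|].
replace (t * / exp t * (exp t * t)) with (t * t) by (field; lra).
replace (4 / t * (exp t * t)) with (4 * exp t) by (field; lra). lra.
Qed.

Lemma pw_mul_exp_neg_at_infty p : p <= 1 ->
  filterlim (fun t => pw t p * exp (- t)) (Rbar_locally p_infty) (locally 0).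
Proof.
intros Hp. apply filterlim_locally. intros eps. pose proof (cond_pos eps).
exists (Rmax 1 (4 / eps)). intros t Ht.
pose proof (Rmax_l 1 (4 / eps)). pose proof (Rmax_r 1 (4 / eps)).
change (Rabs (pw t p * exp (- t) - 0) < eps).
rewrite Rminus_0_r, Rabs_pos_eq by (apply Rmult_le_pos; [apply pw_ge0 | left; apply exp_pos]).
assert (Hpt : pw t p <= t) by (rewrite <- (pw_1_r t) at 2 by lra; apply pw_le_compat_r; lra).
assert (H4 : 4 / t <= eps).
{ apply (Rmult_le_reg_r t); [lra|]. replace (4 / t * t) with (eps * (4 / eps)) by (field; lra).
  apply Rmult_le_compat_l; lra. }
pose proof (mult_exp_neg_lt t ltac:(lra)). pose proof (exp_pos (- t)). nra.
Qed.

Lemma pw_mul_exp_neg_at_0 p : 0 < p ->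
  filterlim (fun t => pw t p * exp (- t)) (at_right 0) (locally 0).
Proof.
intros Hp. replace (locally 0) with (locally (pw 0 p * exp (- 0)))
  by (rewrite pw_nonpos by lra; f_equal; ring).
apply (filterlim_filter_le_1 _ (filter_le_within (F := locally 0) (fun t => 0 < t))).
apply (continuous_mult (fun t => pw t p) (fun t => exp (- t))).
- apply continuous_pw_of_exp_pos, Hp.
- apply (ex_derive_continuous (K := R_AbsRing) (V := R_NormedModule)). auto_derive. easy.
Qed.

Definition Gamma_integrand (z t : R) : R := pw t (z - 1) * exp (- t).

Lemma Gamma_integrand_pos z t : 0 < t -> 0 < Gamma_integrand z t.
Proof.
intros Ht. unfold Gamma_integrand. rewrite pw_pos by exact Ht.
apply Rmult_lt_0_compat; apply exp_pos.
Qed.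

Lemma continuous_Gamma_integrand z t : 0 < t -> continuous (Gamma_integrand z) t.
Proof.
intros Ht. apply (continuous_mult (fun t => pw t (z - 1)) (fun t => exp (- t))).
- apply continuous_pw_of_pos, Ht.
- apply (ex_derive_continuous (K := R_AbsRing) (V := R_NormedModule)). auto_derive. easy.
Qed.

Lemma ex_RInt_Gamma_integrand z u v : 0 < u -> 0 < v -> ex_RInt (Gamma_integrand z) u v.
Proof.
intros Hu Hv. apply (ex_RInt_continuous (V := R_CompleteNormedModule)). intros t Ht.
apply continuous_Gamma_integrand. pose proof (Rmin_glb_lt u v 0). lra.
Qed.

Lemma RInt_Gamma_integrand_ge0 z u v : 0 < u <= v -> 0 <= RInt (Gamma_integrand z) u v.
Proof.
intros Huv. apply RInt_ge_0; [lra | apply ex_RInt_Gamma_integrand; lra |].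
intros t Ht. left. apply Gamma_integrand_pos. lra.
Qed.

Lemma RInt_Gamma_integrand_from_1_le z y : 0 < y <= 1 / 2 ->
  RInt (Gamma_integrand z) 1 y <= - RInt (Gamma_integrand z) (1 / 2) 1.
Proof.
intros Hy. rewrite <- opp_RInt_swap by (apply ex_RInt_Gamma_integrand; lra).
rewrite <- (RInt_Chasles _ y (1 / 2) 1) by (apply ex_RInt_Gamma_integrand; lra).
pose proof (RInt_Gamma_integrand_ge0 z y (1 / 2) Hy).
change (- (RInt (Gamma_integrand z) y (1 / 2) + RInt (Gamma_integrand z) (1 / 2) 1)
        <= - RInt (Gamma_integrand z) (1 / 2) 1). lra.
Qed.

Lemma Gamma_head z : 0 < z -> exists l,
  filterlim (fun y => RInt (Gamma_integrand z) 1 y) (at_right 0) (locally l) /\ l < 0.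
Proof.
intros Hz. set (G := Gamma_integrand z).
assert (HP : at_right 0 (fun y => 0 < y < 1 / 2)).
{ exists (mkposreal (1 / 2) ltac:(lra)). intros y Hy Hy0. change (Rabs (y - 0) < 1 / 2) in Hy.
  apply Rabs_def2 in Hy. lra. }
destruct (RInt_cvg_of_dominated G (fun t => pw t z / z) 1 (fun y => 0 < y < 1 / 2) HP)
  as [l Hl].
- intros u Hu. apply ex_RInt_Gamma_integrand; lra.
- intros u v Hu Hv. apply ex_RInt_Gamma_integrand; lra.
- intros u v Hu Hv. apply (abs_RInt_le_primitive G (fun t => pw t (z - 1)) (fun t => pw t z / z)).
  + apply ex_RInt_Gamma_integrand; lra.
  + intros t Ht. assert (0 < t) by (pose proof (Rmin_glb_lt u v 0); lra).
    unfold G, Gamma_integrand.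
    rewrite Rabs_pos_eq by (apply Rmult_le_pos; [apply pw_ge0 | left; apply exp_pos]).
    pose proof (pw_ge0 t (z - 1)). pose proof (exp_neg_le_1 t ltac:(lra)). nra.
  + replace (pw v z / z - pw u z / z)
      with ((pw v (z - 1 + 1) - pw u (z - 1 + 1)) / (z - 1 + 1))
      by (replace (z - 1 + 1) with z by ring; field; lra).
    apply is_RInt_pw; lra.
- exists (pw 0 z / z).
  apply (filterlim_filter_le_1 _ (filter_le_within (F := locally 0) (fun t => 0 < t))).
  apply (continuous_mult (fun t => pw t z) (fun _ => / z));
    [apply continuous_pw_of_exp_pos, Hz | apply continuous_const].
- exists l. split; [exact Hl|].
  assert (Hhalf : 0 < RInt G (1 / 2) 1).
  { apply RInt_gt_0; [lra | intros t Ht; apply Gamma_integrand_pos; lra |].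
    intros t Ht. apply continuous_Gamma_integrand. lra. }
  assert (Hle : Rbar_le l (- RInt G (1 / 2) 1)).
  { apply (filterlim_le (F := at_right 0) (fun y => RInt G 1 y) (fun _ => - RInt G (1 / 2) 1));
      [| exact Hl | apply filterlim_const].
    apply (filter_imp (fun y => 0 < y < 1 / 2)); [| exact HP].
    intros y Hy. apply RInt_Gamma_integrand_from_1_le. lra. }
  simpl in Hle. lra.
Qed.

Lemma Gamma_tail z : z <= 1 -> exists l,
  filterlim (fun y => RInt (Gamma_integrand z) 1 y) (Rbar_locally p_infty) (locally l) /\ 0 <= l.
Proof.
intros Hz. set (G := Gamma_integrand z).
assert (HP : Rbar_locally p_infty (fun y => 1 < y)) by (exists 1; auto).
destruct (RInt_cvg_of_dominated G (fun t => - exp (- t)) 1 (fun y => 1 < y) HP) as [l Hl].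
- intros u Hu. apply ex_RInt_Gamma_integrand; lra.
- intros u v Hu Hv. apply ex_RInt_Gamma_integrand; lra.
- intros u v Hu Hv. apply (abs_RInt_le_primitive G (fun t => exp (- t)) (fun t => - exp (- t))).
  + apply ex_RInt_Gamma_integrand; lra.
  + intros t Ht. assert (1 < t) by (pose proof (Rmin_glb_lt u v 1); lra).
    unfold G, Gamma_integrand.
    rewrite Rabs_pos_eq by (apply Rmult_le_pos; [apply pw_ge0 | left; apply exp_pos]).
    assert (pw t (z - 1) <= 1).
    { apply (Rle_trans _ (pw t 0)); [apply pw_le_compat_r | rewrite pw_0_r]; lra. }
    pose proof (pw_ge0 t (z - 1)). pose proof (exp_pos (- t)). nra.
  + replace (- exp (- v) - - exp (- u)) with (minus (- exp (- v)) (- exp (- u)))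
      by (unfold minus, plus, opp; simpl; ring).
    apply (is_RInt_derive (fun t => - exp (- t))); intros x _.
    * auto_derive; [easy | ring].
    * apply (ex_derive_continuous (K := R_AbsRing) (V := R_NormedModule)). auto_derive. easy.
- exists (opp 0).
  apply (filterlim_comp _ _ _ (fun t => exp (- t)) opp _ (locally 0));
    [| apply (filterlim_opp (K := R_AbsRing) (V := R_NormedModule))].
  apply (filterlim_ext_loc (fun t => pw t 0 * exp (- t))); [| apply pw_mul_exp_neg_at_infty; lra].
  exists 0. intros t Ht. rewrite pw_0_r by lra. ring.
- exists l. split; [exact Hl|]. change (Rbar_le 0 l).
  apply (filterlim_le (F := Rbar_locally p_infty) (fun _ => 0) (fun y => RInt G 1 y));
    [| apply filterlim_const | exact Hl].
  apply (filter_imp (fun y => 1 < y)); [| exact HP].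
  intros y Hy. apply RInt_Gamma_integrand_ge0. lra.
Qed.

Lemma is_RInt_gen_Gamma z : 0 < z <= 1 ->
  is_RInt_gen (Gamma_integrand z) (at_right 0) (Rbar_locally p_infty) (Gamma z) /\ 0 < Gamma z.
Proof.
intros Hz.
destruct (Gamma_head z (proj1 Hz)) as [l0 [Hl0 Hneg]].
destruct (Gamma_tail z (proj2 Hz)) as [l1 [Hl1 Hnonneg]].
assert (HG : is_RInt_gen (Gamma_integrand z) (at_right 0) (Rbar_locally p_infty) (plus (- l0) l1)).
{ apply (is_RInt_gen_Chasles (V := R_NormedModule) _ 1).
  - apply is_RInt_gen_to_point; [| exact Hl0].
    exists (mkposreal 1 Rlt_0_1). intros y _ Hy. apply ex_RInt_Gamma_integrand; lra.
  - apply is_RInt_gen_from_point; [| exact Hl1].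
    exists 0. intros y Hy. apply ex_RInt_Gamma_integrand; lra. }
assert (E : Gamma z = plus (- l0) l1) by exact (is_RInt_gen_unique _ _ HG).
rewrite E. split; [exact HG|]. change (0 < - l0 + l1). lra.
Qed.

Lemma eventually_pos_between :
  filter_prod (at_right 0) (Rbar_locally p_infty)
    (fun ab => forall x, Rmin (fst ab) (snd ab) <= x <= Rmax (fst ab) (snd ab) -> 0 < x).
Proof.
apply (Filter_prod _ _ _ (fun a => 0 < a) (fun b => 0 < b)).
- exists (mkposreal 1 Rlt_0_1). intros y _ Hy. exact Hy.
- exists 0. auto.
- intros a b Ha Hb x Hx. simpl in Hx. pose proof (Rmin_glb_lt a b 0). lra.
Qed.

Lemma is_derive_Gamma_primitive z t : 0 < t ->
  is_derive (fun t => pw t z * exp (- t)) t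
    (z * Gamma_integrand z t - Gamma_integrand (z + 1) t).
Proof.
intros Ht. unfold Gamma_integrand. replace (z + 1 - 1) with z by ring.
replace (z * (pw t (z - 1) * exp (- t)) - pw t z * exp (- t))
  with (plus (mult (z * pw t (z - 1)) (exp (- t))) (mult (pw t z) (- exp (- t))))
  by (unfold plus, mult; simpl; ring).
apply (is_derive_mult (fun t => pw t z) (fun t => exp (- t))).
- apply is_derive_pw, Ht.
- auto_derive; [easy | ring].
- intros; apply Rmult_comm.
Qed.

Lemma Gamma_succ z : 0 < z <= 1 -> Gamma (z + 1) = z * Gamma z.
Proof.
intros Hz. set (H := fun t => pw t z * exp (- t)).
set (D := fun t => z * Gamma_integrand z t - Gamma_integrand (z + 1) t).
assert (HD : forall t, 0 < t -> Derive H t = D t)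
  by (intros t Ht; apply is_derive_unique, is_derive_Gamma_primitive, Ht).
assert (HH : is_RInt_gen (Derive H) (at_right 0) (Rbar_locally p_infty) (0 - 0)).
{ apply is_RInt_gen_Derive.
    eapply filter_imp; [| exact eventually_pos_between].
    intros ab Hab x Hx. eexists. apply is_derive_Gamma_primitive, Hab, Hx.
  - eapply filter_imp; [| exact eventually_pos_between].
    intros ab Hab x Hx. assert (Hx0 := Hab x Hx).
    apply (continuous_ext_loc _ D).
    + exists (mkposreal x Hx0). intros y Hy. change (Rabs (y - x) < x) in Hy.
      apply Rabs_def2 in Hy. symmetry. apply HD. lra.
    + apply (continuous_minus (fun t => z * Gamma_integrand z t)).
      * apply (continuous_mult (fun _ => z)); [apply continuous_const|].
        apply continuous_Gamma_integrand, Hx0.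
      * apply continuous_Gamma_integrand, Hx0.
  - apply pw_mul_exp_neg_at_0, Hz.
  - apply pw_mul_exp_neg_at_infty, Hz. }
destruct (is_RInt_gen_Gamma z Hz) as [HG _].
assert (HS := is_RInt_gen_minus _ _ _ _ (is_RInt_gen_scal _ z _ HG) HH).
assert (HS' : is_RInt_gen (Gamma_integrand (z + 1)) (at_right 0) (Rbar_locally p_infty)
                (z * Gamma z)).
{ replace (z * Gamma z) with (minus (scal z (Gamma z)) (0 - 0))
    by (unfold minus, plus, opp, scal; simpl; unfold mult; simpl; ring).
  eapply is_RInt_gen_ext; [| exact HS].
  eapply filter_imp; [| exact eventually_pos_between].
  intros ab Hab x Hx. rewrite HD by (apply Hab; lra).
  unfold D, minus, plus, opp, scal; simpl; unfold mult; simpl. ring. }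
unfold Gamma at 1. exact (is_RInt_gen_unique _ _ HS').
Qed.

(** * Regularity on [0,1] and on Omega *)

Lemma continuous_on_Omega_unif T g : continuous_on_Omega T g ->
  exists d : posreal, forall x t y s, 0 <= x <= 1 -> 0 <= t <= T -> 0 <= y <= 1 -> 0 <= s <= T ->
    Rabs (x - y) < d -> Rabs (t - s) < d -> Rabs (g x t - g y s) < 2.
Proof.
intros Hc.
assert (Hdelta : forall p : R * R, {d : posreal | 0 <= fst p <= 1 -> 0 <= snd p <= T ->
  forall y s, 0 <= y <= 1 -> 0 <= s <= T -> Rabs (y - fst p) < d -> Rabs (s - snd p) < d ->
    Rabs (g y s - g (fst p) (snd p)) < 1}).
{ intros p. apply constructive_indefinite_description.
  destruct (classic (0 <= fst p <= 1 /\ 0 <= snd p <= T)) as [[Hx Ht]|Hout].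
  - destruct (Hc (fst p) (snd p) Hx Ht (mkposreal 1 Rlt_0_1)) as [d Hd]. exists d. auto.
  - exists (mkposreal 1 Rlt_0_1). intros Hx Ht. tauto. }
set (gauge := fun q : Compactness.Tn 2 R =>
  match q with (x, (t, _)) => pos_div_2 (proj1_sig (Hdelta (x, t))) end).
(* A uniform Lebesgue number for the cover by the balls of half the continuity radii. *)
destruct (compactness_value 2 (0, (0, tt)) (1, (T, tt)) gauge) as [d Hd].
exists d. intros x t y s Hx Ht Hy Hs Hxy Hts.
apply NNPP. intros Hn. apply (Hd (x, (t, tt))); [simpl; tauto|].
intros [[x0 [t0 []]] [[Hx0 [Ht0 _]] [[Cx [Ct _]] Hdle]]]. apply Hn.
simpl in Cx, Ct, Hdle. destruct (Hdelta (x0, t0)) as [d0 Hd0]. simpl in *.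
pose proof (cond_pos d0). assert (Hxt : Rabs (g x t - g x0 t0) < 1) by (apply Hd0; auto; lra).
assert (Hys : Rabs (g y s - g x0 t0) < 1).
{ apply Hd0; auto.
  - apply Rabs_def2 in Cx. apply Rabs_def2 in Hxy. apply Rabs_def1; lra.
  - apply Rabs_def2 in Ct. apply Rabs_def2 in Hts. apply Rabs_def1; lra. }
replace (g x t - g y s) with ((g x t - g x0 t0) - (g y s - g x0 t0)) by ring.
eapply Rle_lt_trans; [apply Rabs_triang|]. rewrite Rabs_Ropp. lra.
Qed.

Lemma continuous_on_Omega_bounded T g : 0 <= T -> continuous_on_Omega T g ->
  exists K, forall x t, 0 <= x <= 1 -> 0 <= t <= T -> Rabs (g x t) <= K.
Proof.
intros HT Hc. destruct (continuous_on_Omega_unif T g Hc) as [d Hd].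
pose proof (cond_pos d) as Hd0.
destruct (nfloor_ex ((1 + T) / d)) as [m [_ Hm]]; [apply Rdiv_le_0_compat; lra|].
rewrite <- S_INR in Hm. set (n := S m) in Hm.
assert (Hn : 0 < INR n) by apply lt_0_INR, Nat.lt_0_succ.
assert (Hstep : 1 / INR n < d /\ T / INR n < d).
{ assert (1 + T < d * INR n).
  { apply (Rmult_lt_compat_l d) in Hm; [|lra]. replace (d * ((1 + T) / d)) with (1 + T) in Hm
      by (field; lra). exact Hm. }
  split; apply (Rmult_lt_reg_r (INR n)); auto; unfold Rdiv; rewrite Rmult_assoc, Rinv_l; lra. }
exists (Rabs (g 0 0) + 2 * INR n). intros x t Hx Ht.
(* Walk from (0,0) to (x,t) in n steps, each shorter than d. *)
assert (Hchain : forall i, (i <= n)%nat ->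
  Rabs (g (INR i * (x / INR n)) (INR i * (t / INR n))) <= Rabs (g 0 0) + 2 * INR i).
{ induction i as [|i IH]; intros Hi.
  - simpl. rewrite !Rmult_0_l. lra.
  - assert (Hi' : INR (S i) <= INR n) by (apply le_INR; exact Hi).
    rewrite S_INR in Hi' |- *. pose proof (pos_INR i).
    pose proof (Rinv_0_lt_compat _ Hn).
    assert (Hx' : 0 <= x / INR n <= 1 / INR n)
      by (unfold Rdiv; split; [apply Rmult_le_pos | apply Rmult_le_compat_r]; lra).
    assert (Ht' : 0 <= t / INR n <= T / INR n)
      by (unfold Rdiv; split; [apply Rmult_le_pos | apply Rmult_le_compat_r]; lra).
    assert (Hxn : x / INR n * INR n = x) by (field; lra).
    assert (Htn : t / INR n * INR n = t) by (field; lra).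
    assert (Hlink : Rabs (g ((INR i + 1) * (x / INR n)) ((INR i + 1) * (t / INR n))
                      - g (INR i * (x / INR n)) (INR i * (t / INR n))) < 2).
    { apply Hd; try (split; nra);
        [ replace ((INR i + 1) * (x / INR n) - INR i * (x / INR n)) with (x / INR n) by ring
        | replace ((INR i + 1) * (t / INR n) - INR i * (t / INR n)) with (t / INR n) by ring ];
        rewrite Rabs_pos_eq; lra. }
    pose proof (IH ltac:(lia)).
    pose proof (Rabs_triang_inv (g ((INR i + 1) * (x / INR n)) ((INR i + 1) * (t / INR n)))
                                (g (INR i * (x / INR n)) (INR i * (t / INR n)))). lra. }
specialize (Hchain n (Nat.le_refl n)).
replace (INR n * (x / INR n)) with x in Hchain by (field; lra).
replace (INR n * (t / INR n)) with t in Hchain by (field; lra). exact Hchain.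
Qed.

Lemma Mbar_ub T g : 0 <= T -> continuous_on_Omega T g ->
  forall x t, 0 <= x <= 1 -> 0 <= t <= T -> Rabs (g x t) <= Mbar T g.
Proof.
intros HT Hc x t Hx Ht. destruct (continuous_on_Omega_bounded T g HT Hc) as [K HK].
unfold Mbar.
destruct (Lub_Rbar_correct (fun z => exists x t, 0 <= x <= 1 /\ 0 <= t <= T /\ z = Rabs (g x t)))
  as [Hub Hlub].
assert (H1 := Hub (Rabs (g x t)) (ex_intro _ x (ex_intro _ t (conj Hx (conj Ht eq_refl))))).
assert (H2 : Rbar_le
  (Lub_Rbar (fun z => exists x t, 0 <= x <= 1 /\ 0 <= t <= T /\ z = Rabs (g x t))) K).
{ apply Hlub. intros z [y [s [Hy [Hs ->]]]]. apply HK; assumption. }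
destruct (Lub_Rbar _); simpl in *; tauto.
Qed.

Lemma is_deriv_on_eps f f' x : is_deriv_on 0 1 f f' -> 0 <= x <= 1 ->
  forall eps : posreal, exists d : posreal, forall y, 0 <= y <= 1 -> y <> x ->
    Rabs (y - x) < d -> Rabs ((f y - f x) / (y - x) - f' x) < eps.
Proof.
intros H Hx eps. destruct (H x Hx (ball (f' x) eps) (locally_ball _ _)) as [d Hd].
exists d. intros y Hy Hyx Hyd. exact (Hd y Hyd (conj Hy Hyx)).
Qed.

Lemma is_derive_of_is_deriv_on f f' x : is_deriv_on 0 1 f f' -> 0 < x < 1 -> is_derive f x (f' x).
Proof.
intros H Hx. apply is_derive_Reals. intros eps Heps.
destruct (is_deriv_on_eps f f' x H ltac:(lra) (mkposreal eps Heps)) as [d Hd].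
assert (Hm : 0 < Rmin d (Rmin x (1 - x))) by (repeat apply Rmin_pos; lra || apply cond_pos).
exists (mkposreal _ Hm). intros e He0 He. simpl in He.
pose proof (Rmin_l d (Rmin x (1 - x))). pose proof (Rmin_r d (Rmin x (1 - x))).
pose proof (Rmin_l x (1 - x)). pose proof (Rmin_r x (1 - x)).
apply Rabs_def2 in He. specialize (Hd (x + e)).
replace (x + e - x) with e in Hd by ring. apply Hd; [lra | lra | apply Rabs_def1; lra].
Qed.

Lemma is_deriv_on_continuous f f' x : is_deriv_on 0 1 f f' -> 0 <= x <= 1 ->
  forall eps : posreal, exists d : posreal, forall y, 0 <= y <= 1 ->
    Rabs (y - x) < d -> Rabs (f y - f x) < eps.
Proof.
intros H Hx eps.
destruct (is_deriv_on_eps f f' x H Hx (mkposreal 1 Rlt_0_1)) as [d Hd]. simpl in Hd.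
set (A := Rabs (f' x) + 1). assert (HA : 0 < A) by (unfold A; pose proof (Rabs_pos (f' x)); lra).
assert (Hm : 0 < Rmin d (eps / A))
  by (apply Rmin_pos; [apply cond_pos | apply Rdiv_lt_0_compat; [apply cond_pos | lra]]).
exists (mkposreal _ Hm). intros y Hy Hyx. simpl in Hyx.
pose proof (Rmin_l d (eps / A)). pose proof (Rmin_r d (eps / A)).
destruct (Req_dec y x) as [->|Hne]; [rewrite Rminus_eq_0, Rabs_R0; apply cond_pos|].
specialize (Hd y Hy Hne ltac:(lra)).
set (q := (f y - f x) / (y - x)) in Hd.
replace (f y - f x) with (q * (y - x)) by (unfold q; field; lra).
assert (Hq : Rabs q <= A).
{ unfold A. replace q with ((q - f' x) + f' x) by ring.
  eapply Rle_trans; [apply Rabs_triang|]. lra. }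
rewrite Rabs_mult. apply (Rle_lt_trans _ (A * Rabs (y - x))).
- apply Rmult_le_compat_r; [apply Rabs_pos | exact Hq].
- replace (pos eps) with (A * (eps / A)) by (field; lra). apply Rmult_lt_compat_l; lra.
Qed.

(* [is_deriv_on] only controls a function on [0,1], one-sidedly at the end points, while
   Coquelicot's [continuous] is two-sided: composing with [clamp01] gives a continuous
   extension to all of R that agrees with the function on [0,1]. *)
Definition clamp01 (y : R) : R := Rmax 0 (Rmin 1 y).

Lemma clamp01_id y : 0 <= y <= 1 -> clamp01 y = y.
Proof. intros Hy. unfold clamp01. rewrite Rmin_right, Rmax_right; lra. Qed.

Lemma clamp01_in y : 0 <= clamp01 y <= 1.
Proof.
unfold clamp01. split; [apply Rmax_l|]. apply Rmax_lub; [lra | apply Rmin_l].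
Qed.

Lemma clamp01_lip x y : Rabs (clamp01 y - clamp01 x) <= Rabs (y - x).
Proof.
unfold clamp01, Rmax, Rmin.
repeat destruct Rle_dec; unfold Rabs; repeat destruct Rcase_abs; lra.
Qed.

Lemma continuous_clamp01_comp f f' : is_deriv_on 0 1 f f' ->
  forall x, continuous (fun y => f (clamp01 y)) x.
Proof.
intros H x. apply filterlim_locally. intros eps.
destruct (is_deriv_on_continuous f f' (clamp01 x) H (clamp01_in x) eps) as [d Hd].
exists d. intros y Hy. apply Hd; [apply clamp01_in|].
eapply Rle_lt_trans; [apply clamp01_lip | exact Hy].
Qed.

Lemma is_derive_clamp01_comp f f' y : is_deriv_on 0 1 f f' -> 0 < y < 1 ->
  is_derive (fun s => f (clamp01 s)) y (f' y).
Proof.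
intros H Hy. apply (is_derive_ext_loc f); [| apply is_derive_of_is_deriv_on; assumption].
assert (Hm : 0 < Rmin y (1 - y)) by (apply Rmin_pos; lra).
exists (mkposreal _ Hm). intros z Hz. change (Rabs (z - y) < Rmin y (1 - y)) in Hz.
pose proof (Rmin_l y (1 - y)). pose proof (Rmin_r y (1 - y)). apply Rabs_def2 in Hz.
rewrite clamp01_id by lra. reflexivity.
Qed.

(** * Linear interpolation *)

Definition lin_interp (f : R -> R) (a b s : R) : R := (f a * (b - s) + f b * (s - a)) / (b - a).

Lemma mvt_interior (f df : R -> R) a b : a < b ->
  (forall x, a < x < b -> is_derive f x (df x)) -> (forall x, a <= x <= b -> continuous f x) ->
  exists c, a < c < b /\ f b - f a = df c * (b - a).
Proof.
intros Hab Hd Hc.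
set (pr1 := fun c (P : a < c < b) =>
  exist (fun l => derivable_pt_lim f c l) (df c) (proj1 (is_derive_Reals _ _ _) (Hd c P))).
destruct (MVT f id a b pr1 (fun c _ => derivable_pt_id c) Hab) as [c [P Hc']].
- intros c Hc0. apply continuity_pt_filterlim, Hc, Hc0.
- intros c _. apply derivable_continuous_pt, derivable_pt_id.
- exists c. split; [exact P|]. simpl in Hc'. rewrite derive_pt_id in Hc'. unfold id in Hc'. lra.
Qed.

Lemma second_derivative_root (phi dphi d2phi : R -> R) a s b : a < s < b ->
  phi a = 0 -> phi s = 0 -> phi b = 0 ->
  (forall y, a <= y <= b -> continuous phi y) ->
  (forall y, a < y < b -> is_derive phi y (dphi y)) ->
  (forall y, a < y < b -> is_derive dphi y (d2phi y)) ->
  exists xi, a < xi < b /\ d2phi xi = 0.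
Proof.
intros Hs Pa Ps Pb Hc H1 H2.
destruct (mvt_interior phi dphi a s) as [x1 [Hx1 E1]];
  [lra | intros y Hy; apply H1; lra | intros y Hy; apply Hc; lra |].
destruct (mvt_interior phi dphi s b) as [x2 [Hx2 E2]];
  [lra | intros y Hy; apply H1; lra | intros y Hy; apply Hc; lra |].
assert (D1 : dphi x1 = 0) by (rewrite Pa, Ps in E1; apply (Rmult_eq_reg_r (s - a)); lra).
assert (D2 : dphi x2 = 0) by (rewrite Pb, Ps in E2; apply (Rmult_eq_reg_r (b - s)); lra).
destruct (mvt_interior dphi d2phi x1 x2) as [xi [Hxi E3]];
  [lra | intros y Hy; apply H2; lra | |].
- intros y Hy. apply (ex_derive_continuous (K := R_AbsRing) (V := R_NormedModule)).
  exists (d2phi y). apply H2. lra.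
- exists xi. split; [lra|]. rewrite D1, D2 in E3.
  assert (Hz : d2phi xi * (x2 - x1) = 0) by lra.
  apply Rmult_integral in Hz. lra.
Qed.

Lemma lin_interp_error (f f1 f2 : R -> R) a b s : a < s < b ->
  (forall y, a <= y <= b -> continuous f y) ->
  (forall y, a < y < b -> is_derive f y (f1 y)) ->
  (forall y, a < y < b -> is_derive f1 y (f2 y)) ->
  exists xi, a < xi < b /\ f s - lin_interp f a b s = f2 xi / 2 * ((s - a) * (s - b)).
Proof.
intros Hs Hc H1 H2.
assert (Hden : (s - a) * (s - b) <> 0) by (apply Rmult_integral_contrapositive; lra).
set (K := (f s - lin_interp f a b s) / ((s - a) * (s - b))).
destruct (second_derivative_root
  (fun y => f y - lin_interp f a b y - K * ((y - a) * (y - b)))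
  (fun y => f1 y - (f b - f a) / (b - a) - K * (2 * y - a - b))
  (fun y => f2 y - 2 * K) a s b Hs) as [xi [Hxi Hroot]].
- unfold lin_interp. field. lra.
- unfold K. field. lra.
- unfold lin_interp. field. lra.
- intros y Hy. apply (continuous_minus (fun y => f y - lin_interp f a b y)).
  + apply (continuous_minus f); [apply Hc, Hy|]. unfold lin_interp.
    apply (ex_derive_continuous (K := R_AbsRing) (V := R_NormedModule)). auto_derive. easy.
  + apply (ex_derive_continuous (K := R_AbsRing) (V := R_NormedModule)). auto_derive. easy.
- intros y Hy. apply (is_derive_minus (fun y => f y - lin_interp f a b y)).
  + apply (is_derive_minus f); [apply H1, Hy|]. unfold lin_interp. auto_derive; [easy | field; lra].
  + auto_derive; [easy | ring].
- intros y Hy. replace (f2 y - 2 * K) with (f2 y - 0 - K * 2) by ring.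
  apply (is_derive_minus (fun y => f1 y - (f b - f a) / (b - a))).
  + apply (is_derive_minus f1); [apply H2, Hy | auto_derive; [easy | ring]].
  + auto_derive; [easy | ring].
- exists xi. split; [exact Hxi|]. replace (f2 xi) with (2 * K) by lra. unfold K. field. lra.
Qed.

Lemma lin_interp_error_le (f f1 f2 : R -> R) a b s Mb : a < b -> a <= s <= b ->
  (forall y, a <= y <= b -> continuous f y) ->
  (forall y, a < y < b -> is_derive f y (f1 y)) ->
  (forall y, a < y < b -> is_derive f1 y (f2 y)) ->
  (forall y, a < y < b -> Rabs (f2 y) <= Mb) ->
  Rabs (f s - lin_interp f a b s) <= Mb * (b - a) ^ 2 / 8.
Proof.
intros Hab Hs Hc H1 H2 H3.
assert (HMb : 0 <= Mb)
  by (pose proof (H3 ((a + b) / 2) ltac:(lra)); pose proof (Rabs_pos (f2 ((a + b) / 2))); lra).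
destruct (Req_dec s a) as [->|Hsa]; [| destruct (Req_dec s b) as [->|Hsb]].
- unfold lin_interp. replace (f a - _) with 0 by (field; lra). rewrite Rabs_R0.
  pose proof (pow2_ge_0 (b - a)). nra.
- unfold lin_interp. replace (f b - _) with 0 by (field; lra). rewrite Rabs_R0.
  pose proof (pow2_ge_0 (b - a)). nra.
- destruct (lin_interp_error f f1 f2 a b s ltac:(lra) Hc H1 H2) as [xi [Hxi ->]].
  assert (Hq : Rabs ((s - a) * (s - b)) <= (b - a) ^ 2 / 4).
  { rewrite Rabs_left1 by (apply Rmult_le_0_l; lra).
    pose proof (pow2_ge_0 (s - (a + b) / 2)). nra. }
  set (q := (s - a) * (s - b)) in *. unfold Rdiv at 1.
  rewrite !Rabs_mult, (Rabs_pos_eq (/ 2)) by lra.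
  apply (Rle_trans _ (Mb * / 2 * ((b - a) ^ 2 / 4))); [| lra].
  apply Rmult_le_compat; [| apply Rabs_pos | | exact Hq].
  + apply Rmult_le_pos; [apply Rabs_pos | lra].
  + apply Rmult_le_compat_r; [lra | apply H3, Hxi].
Qed.

(** * Product integration *)

Fixpoint sum_lt (u : nat -> R) (n : nat) : R :=
  match n with O => 0 | S m => sum_lt u m + u m end.

Lemma wgt_sum_by_parts gamma r (u : nat -> R) : (1 <= r)%nat ->
  sum_f_R0 (fun j => wgt gamma j r * u j) r =
  sum_lt (fun j => - u j * wtil gamma r 1 j + u (S j) * wtil gamma r 0 j) r.
Proof.
intros Hr. set (G := fun j => - u j * wtil gamma r 1 j + u (S j) * wtil gamma r 0 j).
assert (Hpartial : forall n, (n < r)%nat ->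
  sum_f_R0 (fun j => wgt gamma j r * u j) n = sum_lt G n - wtil gamma r 1 n * u n).
{ induction n as [|n IH]; intros Hn.
  - simpl. unfold wgt.
    replace (Nat.eqb 0 r) with false by (symmetry; apply Nat.eqb_neq; lia). simpl. ring.
  - cbn [sum_f_R0 sum_lt]. rewrite IH by lia. unfold wgt at 1.
    replace (Nat.eqb (S n) r) with false by (symmetry; apply Nat.eqb_neq; lia).
    replace (S n - 1)%nat with n by lia. unfold G. simpl. ring. }
destruct r as [|m]; [lia|]. cbn [sum_f_R0 sum_lt]. rewrite Hpartial by lia. unfold wgt.
rewrite Nat.eqb_refl. replace (S m - 1)%nat with m by lia. unfold G. simpl. ring.
Qed.

Section ProductIntegration.

Variables (gamma : R) (f f1 f2 : R -> R) (Mb h : R) (r : nat).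
Hypothesis Hgamma : 0 < gamma < 1.
Hypothesis Hf : forall y, continuous f y.
Hypothesis Hf1 : forall y, 0 < y < 1 -> is_derive f y (f1 y).
Hypothesis Hf2 : forall y, 0 < y < 1 -> is_derive f1 y (f2 y).
Hypothesis Hf2_le : forall y, 0 <= y <= 1 -> Rabs (f2 y) <= Mb.
Hypothesis Hh : 0 < h.
Hypothesis Hr : (1 <= r)%nat.
Hypothesis Hc1 : INR r * h < 1.

Let x (j : nat) : R := INR j * h.
Let c : R := INR r * h.
Let k (s : R) : R := pw (c - s) (- gamma).
Let g (s : R) : R := k s * f s.

Lemma grid_S j : x (S j) = x j + h.
Proof. unfold x. rewrite S_INR. ring. Qed.

Lemma grid_ge0 j : 0 <= x j.
Proof. unfold x. apply Rmult_le_pos; [apply pos_INR | lra]. Qed.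

Lemma grid_lt_c j : (j < r)%nat -> x j < c.
Proof. intros Hj. apply Rmult_lt_compat_r; [exact Hh | apply lt_INR, Hj]. Qed.

Definition kernel_mass (a y : R) : R :=
  (pw (c - a) (1 - gamma) - pw (c - y) (1 - gamma)) / (1 - gamma).

Lemma is_RInt_kernel a y : a < c -> y < c -> is_RInt k a y (kernel_mass a y).
Proof.
intros Ha Hy. unfold kernel_mass. replace (1 - gamma) with (- gamma + 1) by ring.
apply is_RInt_pw_sub; lra.
Qed.

Lemma continuous_kernel_mass a y : continuous (kernel_mass a) y.
Proof.
apply (continuous_mult (fun y => pw (c - a) (1 - gamma) - pw (c - y) (1 - gamma))
  (fun _ => / (1 - gamma)));
  [| apply continuous_const].
apply (continuous_minus (fun _ => pw (c - a) (1 - gamma))); [apply continuous_const|].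
apply continuous_pw_sub_of_exp_pos. lra.
Qed.

Lemma kernel_mass_le a y : 0 <= a <= y -> kernel_mass a y <= pw c (1 - gamma) / (1 - gamma).
Proof.
intros Hay. unfold kernel_mass, Rdiv. apply Rmult_le_compat_r; [left; apply Rinv_0_lt_compat; lra|].
pose proof (pw_ge0 (c - y) (1 - gamma)). pose proof (pw_le_compat_l (c - a) c (1 - gamma)).
lra.
Qed.

(* On a cell [a,b] the interpolant is [lin_interp f a b c + (f a - f b) / (b - a) * (c - s)],
   so the kernel times it is a combination of [(c - s)^(-gamma)] and [(c - s)^(1-gamma)]. *)
Definition interp_primitive (a b y : R) : R :=
  - (lin_interp f a b c * pw (c - y) (1 - gamma) / (1 - gamma)
     + (f a - f b) / (b - a) * pw (c - y) (2 - gamma) / (2 - gamma)).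

Lemma is_RInt_kernel_mul_lin_interp a b y : a < b -> a < c -> y < c ->
  is_RInt (fun s => k s * lin_interp f a b s) a y (interp_primitive a b y - interp_primitive a b a).
Proof.
intros Hab Ha Hy.
set (alpha := lin_interp f a b c). set (beta := (f a - f b) / (b - a)).
assert (H0 := is_RInt_scal _ _ _ alpha _ (is_RInt_pw_sub c (- gamma) a y Ha Hy ltac:(lra))).
assert (H1 := is_RInt_scal _ _ _ beta _ (is_RInt_pw_sub c (1 - gamma) a y Ha Hy ltac:(lra))).
assert (HS := is_RInt_plus _ _ _ _ _ _ H0 H1).
replace (- gamma + 1) with (1 - gamma) in HS by ring.
replace (1 - gamma + 1) with (2 - gamma) in HS by ring.
replace (interp_primitive a b y - interp_primitive a b a) with
  (alpha * ((pw (c - a) (1 - gamma) - pw (c - y) (1 - gamma)) / (1 - gamma))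
   + beta * ((pw (c - a) (2 - gamma) - pw (c - y) (2 - gamma)) / (2 - gamma)))
  by (unfold interp_primitive; fold alpha beta; field; lra).
eapply is_RInt_ext; [| exact HS].
intros s Hs. assert (Hsc : s < c) by (pose proof (Rmax_lub_lt a y c); lra).
unfold plus, scal, k; simpl; unfold mult; simpl.
replace (1 - gamma) with (- gamma + 1) by ring. rewrite pw_plus_1 by lra.
unfold alpha, beta, lin_interp. field. lra.
Qed.

Lemma RInt_cell_error a b y : 0 <= a -> a < b -> b <= 1 -> b <= c -> a <= y <= b -> y < c ->
  exists E, is_RInt g a y (interp_primitive a b y - interp_primitive a b a + E) /\
    Rabs E <= Mb * (b - a) ^ 2 / 8 * kernel_mass a y.
Proof.
intros Ha Hab Hb Hbc Hy Hyc.
set (e := fun s => k s * (f s - lin_interp f a b s)).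
assert (Hex : ex_RInt e a y).
{ apply (ex_RInt_continuous (V := R_CompleteNormedModule)). intros s Hs.
  rewrite Rmin_left, Rmax_right in Hs by lra.
  apply (continuous_mult k (fun s => f s - lin_interp f a b s));
    [apply continuous_pw_sub_of_lt; lra|].
  apply (continuous_minus f); [apply Hf|]. unfold lin_interp.
  apply (ex_derive_continuous (K := R_AbsRing) (V := R_NormedModule)). auto_derive. lra. }
exists (RInt e a y). split.
- eapply is_RInt_ext; [| exact (is_RInt_plus _ _ _ _ _ _
    (is_RInt_kernel_mul_lin_interp a b y Hab ltac:(lra) Hyc)
    (RInt_correct (V := R_CompleteNormedModule) e a y Hex))].
  intros s _. unfold e, g. change (k s * lin_interp f a b s + k s * (f s - lin_interp f a b s)
    = k s * f s). ring.
- apply (norm_RInt_le e (fun s => scal (Mb * (b - a) ^ 2 / 8) (k s)) a y); [lra | |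
    apply (RInt_correct (V := R_CompleteNormedModule)), Hex |
    exact (is_RInt_scal _ _ _ (Mb * (b - a) ^ 2 / 8) _ (is_RInt_kernel a y ltac:(lra) Hyc))].
  intros s Hs. change (Rabs (k s * (f s - lin_interp f a b s)) <= Mb * (b - a) ^ 2 / 8 * k s).
  rewrite Rabs_mult, (Rabs_pos_eq (k s)) by apply pw_ge0.
  rewrite Rmult_comm. apply Rmult_le_compat_r; [apply pw_ge0|].
  apply (lin_interp_error_le f f1 f2); try lra.
  + intros z _. apply Hf.
  + intros z Hz. apply Hf1. lra.
  + intros z Hz. apply Hf2. lra.
  + intros z Hz. apply Hf2_le. lra.
Qed.

Definition cell_integral (j : nat) (y : R) : R :=
  interp_primitive (x j) (x (S j)) y - interp_primitive (x j) (x (S j)) (x j).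

Definition cells_sum (n : nat) : R := sum_lt (fun j => cell_integral j (x (S j))) n.

Lemma Mb_ge0 : 0 <= Mb.
Proof. pose proof (Hf2_le 0 ltac:(lra)). pose proof (Rabs_pos (f2 0)). lra. Qed.

Lemma grid_le_c j : (j <= r)%nat -> x j <= c.
Proof. intros Hj. apply Rmult_le_compat_r; [lra | apply le_INR, Hj]. Qed.

Lemma RInt_cell_integral j y : (j < r)%nat -> x j <= y <= x (S j) -> y < c ->
  exists E, is_RInt g (x j) y (cell_integral j y + E) /\
    Rabs E <= Mb * h ^ 2 / 8 * kernel_mass (x j) y.
Proof.
intros Hj Hy Hyc. assert (HSj := grid_le_c (S j) Hj).
destruct (RInt_cell_error (x j) (x (S j)) y (grid_ge0 j)) as [E HE];
  [rewrite grid_S; lra | unfold c in HSj; lra | exact HSj | exact Hy | exact Hyc |].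
exists E. rewrite grid_S in HE at 3. replace (x j + h - x j) with h in HE by ring. exact HE.
Qed.

Lemma RInt_up_to n y : (n < r)%nat -> x n <= y <= x (S n) -> y < c ->
  exists E, is_RInt g 0 y (cells_sum n + cell_integral n y + E) /\
    Rabs E <= Mb * h ^ 2 / 8 * kernel_mass 0 y.
Proof.
revert y. induction n as [|n IH]; intros y Hn Hy Hyc.
- destruct (RInt_cell_integral 0 y Hn Hy Hyc) as [E HE].
  replace (x 0) with 0 in HE by (unfold x; simpl; ring).
  exists E. unfold cells_sum. simpl. rewrite Rplus_0_l. exact HE.
- assert (HSn := grid_lt_c (S n) Hn).
  destruct (IH (x (S n)) ltac:(lia) ltac:(rewrite grid_S; lra) HSn) as [E1 [HE1 HE1b]].
  destruct (RInt_cell_integral (S n) y Hn Hy Hyc) as [E2 [HE2 HE2b]].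
  exists (E1 + E2). split.
  + replace (cells_sum (S n) + cell_integral (S n) y + (E1 + E2))
      with (plus (cells_sum n + cell_integral n (x (S n)) + E1) (cell_integral (S n) y + E2))
      by (unfold cells_sum; simpl; unfold plus; simpl; ring).
    exact (is_RInt_Chasles _ _ _ _ _ _ HE1 HE2).
  + replace (kernel_mass 0 y) with (kernel_mass 0 (x (S n)) + kernel_mass (x (S n)) y)
      by (unfold kernel_mass; field; lra).
    eapply Rle_trans; [apply Rabs_triang | lra].
Qed.

Lemma cell_integral_weights j : (j < r)%nat ->
  cell_integral j (x (S j)) =
  Rpower h (1 - gamma) * (- f (x j) * wtil gamma r 1 j + f (x (S j)) * wtil gamma r 0 j).
Proof.
intros Hj.
assert (Hm : INR (r - j) = INR r - INR j) by (apply minus_INR; lia).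
assert (Hm1 : 1 <= INR (r - j)) by (apply (le_INR 1); lia).
assert (E1 : c - x j = INR (r - j) * h) by (unfold c, x; rewrite Hm; ring).
assert (E2 : c - x (S j) = (INR (r - j) - 1) * h) by (unfold c, x; rewrite Hm, S_INR; ring).
assert (E3 : x (S j) - x j = h) by (rewrite grid_S; ring).
unfold cell_integral, interp_primitive, lin_interp. rewrite E1, E2, E3, !pw_mul by lra.
replace (x (S j) - c) with (- ((INR (r - j) - 1) * h)) by (rewrite <- E2; ring).
replace (c - x j) with (INR (r - j) * h) by (rewrite <- E1; ring).
replace (2 - gamma) with ((1 - gamma) + 1) by ring.
rewrite Rpower_plus, Rpower_1 by lra.
unfold wtil, cc. rewrite (pw_pos (INR (r - j))) by lra.
replace (1 - gamma + 1) with (2 - gamma) by ring.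
field. lra.
Qed.

Lemma weighted_sum_cells_sum :
  Rpower h (1 - gamma) * sum_f_R0 (fun j => wgt gamma j r * f (x j)) r = cells_sum r.
Proof.
rewrite wgt_sum_by_parts by exact Hr.
assert (H : forall n, (n <= r)%nat -> Rpower h (1 - gamma) *
  sum_lt (fun j => - f (x j) * wtil gamma r 1 j + f (x (S j)) * wtil gamma r 0 j) n = cells_sum n).
{ unfold cells_sum. induction n as [|n IH]; intros Hn; simpl; [ring|].
  rewrite <- IH, cell_integral_weights by lia. ring. }
apply H, Nat.le_refl.
Qed.

Lemma ex_RInt_integrand u v : u < c -> v < c -> ex_RInt g u v.
Proof.
intros Hu Hv. apply (ex_RInt_continuous (V := R_CompleteNormedModule)). intros s Hs.
assert (s < c) by (pose proof (Rmax_lub_lt u v c Hu Hv); lra).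
apply (continuous_mult k f); [apply continuous_pw_sub_of_lt; lra | apply Hf].
Qed.

Lemma c_pos : 0 < c.
Proof. apply Rmult_lt_0_compat; [apply lt_0_INR; lia | exact Hh]. Qed.

Lemma at_left_c_nonneg : at_left c (fun y => 0 <= y < c).
Proof.
exists (mkposreal c c_pos). intros y Hy Hyc. change (Rabs (y - c) < c) in Hy.
apply Rabs_def2 in Hy. lra.
Qed.

Lemma RInt_integrand_cvg : exists V, filterlim (fun y => RInt g 0 y) (at_left c) (locally V).
Proof.
destruct (bounded_continuity (K := R_AbsRing) (V := R_NormedModule) f 0 1 (fun y _ => Hf y))
  as [M0 HM0].
apply (RInt_cvg_of_dominated g (fun y => M0 * kernel_mass 0 y) 0 (fun y => 0 <= y < c)
  at_left_c_nonneg).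
- intros u Hu. apply ex_RInt_integrand; lra.
- intros u v Hu Hv. apply ex_RInt_integrand; lra.
- intros u v Hu Hv.
  apply (abs_RInt_le_primitive g (fun s => M0 * k s) (fun y => M0 * kernel_mass 0 y)).
  + apply ex_RInt_integrand; lra.
  + intros s Hs. pose proof (Rmin_glb u v 0). pose proof (Rmax_lub_lt u v c).
    unfold g. rewrite Rabs_mult, (Rabs_pos_eq (k s)) by apply pw_ge0. rewrite Rmult_comm.
    apply Rmult_le_compat_r; [apply pw_ge0|]. left. apply HM0.
    assert (c < 1) by exact Hc1. lra.
  + replace (M0 * kernel_mass 0 v - M0 * kernel_mass 0 u) with (scal M0 (kernel_mass u v))
      by (unfold kernel_mass, scal; simpl; unfold mult; simpl; field; lra).
    apply (is_RInt_scal (V := R_NormedModule)), is_RInt_kernel; lra.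
- exists (M0 * kernel_mass 0 c).
  apply (filterlim_filter_le_1 _ (filter_le_within (F := locally c) (fun y => y < c))).
  apply (continuous_mult (fun _ => M0)); [apply continuous_const | apply continuous_kernel_mass].
Qed.

Lemma continuous_interp_primitive a b y : continuous (interp_primitive a b) y.
Proof.
assert (Hterm : forall A p, 0 < p -> continuous (fun y => A * pw (c - y) p / p) y).
{ intros A p Hp. apply (continuous_mult (fun y => A * pw (c - y) p) (fun _ => / p));
    [| apply continuous_const].
  apply (continuous_mult (fun _ => A)); [apply continuous_const|].
  apply continuous_pw_sub_of_exp_pos, Hp. }
apply (continuous_opp (fun y => lin_interp f a b c * pw (c - y) (1 - gamma) / (1 - gamma)
  + (f a - f b) / (b - a) * pw (c - y) (2 - gamma) / (2 - gamma))).
apply (continuous_plus (fun y => lin_interp f a b c * pw (c - y) (1 - gamma) / (1 - gamma)));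
  apply Hterm; lra.
Qed.

Lemma RInt_near_c_error y : x (r - 1) < y < c ->
  Rabs (RInt g 0 y - cells_sum r)
  <= Mb * h ^ 2 / 8 * (pw c (1 - gamma) / (1 - gamma))
     + Rabs (cell_integral (r - 1) c - cell_integral (r - 1) y).
Proof.
intros Hy. set (m := (r - 1)%nat) in *.
assert (Hxm : x (S m) = c) by (unfold x, c, m; replace (S (r - 1)) with r by lia; reflexivity).
assert (HS : cells_sum r = cells_sum m + cell_integral m c).
{ unfold cells_sum. replace r with (S m) at 1 by (unfold m; lia). simpl. rewrite Hxm. reflexivity. }
destruct (RInt_up_to m y ltac:(lia) ltac:(rewrite Hxm; lra) (proj2 Hy)) as [E [HE HEb]].
rewrite (is_RInt_unique _ _ _ _ HE), HS.
replace (cells_sum m + cell_integral m y + E - (cells_sum m + cell_integral m c))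
  with (E + - (cell_integral m c - cell_integral m y)) by ring.
eapply Rle_trans; [apply Rabs_triang|]. rewrite Rabs_Ropp.
apply Rplus_le_compat_r. eapply Rle_trans; [exact HEb|].
apply Rmult_le_compat_l; [pose proof Mb_ge0; pose proof (pow2_ge_0 h); nra|].
apply kernel_mass_le. pose proof (grid_ge0 m). lra.
Qed.

(* The Caputo integral is improper at [c]: the estimate is proved for [RInt g 0 y] with [y]
   in the last cell, where the partial cell integral tends to the full one, and passed to the
   limit [y -> c]. *)
Lemma limit_error V : filterlim (fun y => RInt g 0 y) (at_left c) (locally V) ->
  Rabs (V - cells_sum r) <= Mb * h ^ 2 / 8 * (pw c (1 - gamma) / (1 - gamma)).
Proof.
intros HV. set (B := Mb * h ^ 2 / 8 * (pw c (1 - gamma) / (1 - gamma))).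
assert (Hxm : x (r - 1) < c) by (apply grid_lt_c; lia).
assert (Hle : Rbar_le (Rabs (V - cells_sum r))
                      (B + Rabs (cell_integral (r - 1) c - cell_integral (r - 1) c))).
{ apply (filterlim_le (F := at_left c) (fun y => Rabs (RInt g 0 y - cells_sum r))
                      (fun y => B + Rabs (cell_integral (r - 1) c - cell_integral (r - 1) y))).
  - exists (mkposreal (c - x (r - 1)) ltac:(lra)). intros y Hy Hyc.
    change (Rabs (y - c) < c - x (r - 1)) in Hy. apply Rabs_def2 in Hy.
    apply RInt_near_c_error. lra.
  - apply (filterlim_comp _ _ _ _ (fun v => Rabs (v - cells_sum r)) _ (locally V) _ HV).
    apply (continuous_Rabs_comp (fun v => v - cells_sum r)).
    apply (continuous_minus (fun v => v) (fun _ => cells_sum r));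
      [apply continuous_id | apply continuous_const].
  - apply (filterlim_filter_le_1 _ (filter_le_within (F := locally c) (fun y => y < c))).
    apply (continuous_plus (fun _ => B)); [apply continuous_const|].
    apply (continuous_Rabs_comp (fun y => cell_integral (r - 1) c - cell_integral (r - 1) y)).
    apply (continuous_minus (fun _ => cell_integral (r - 1) c)); [apply continuous_const|].
    apply (continuous_minus (interp_primitive (x (r - 1)) (x (S (r - 1)))));
      [apply continuous_interp_primitive | apply continuous_const]. }
rewrite Rminus_eq_0, Rabs_R0, Rplus_0_r in Hle. exact Hle.
Qed.

Lemma caputo_eq_limit (df : R -> R) V : (forall s, 0 <= s <= c -> df s = f s) ->
  filterlim (fun y => RInt g 0 y) (at_left c) (locally V) ->
  caputo gamma df c = / Gamma (1 - gamma) * V.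
Proof.
intros Hdf HV. unfold caputo. f_equal.
apply is_RInt_gen_unique, (is_RInt_gen_ext g).
- apply (Filter_prod _ _ _ (fun a => a = 0) (fun b => 0 <= b < c));
    [reflexivity | exact at_left_c_nonneg |].
  intros a b -> Hb s Hs. simpl in Hs. rewrite Rmin_left, Rmax_right in Hs by lra.
  unfold g, k. rewrite Hdf by lra. reflexivity.
- apply is_RInt_gen_from_point; [| exact HV].
  apply (filter_imp (fun y => 0 <= y < c)); [| exact at_left_c_nonneg].
  intros y Hy. pose proof c_pos. apply ex_RInt_integrand; lra.
Qed.

Lemma caputo_error (df : R -> R) : (forall s, 0 <= s <= c -> df s = f s) ->
  Rabs (caputo gamma df c
        - pw h (1 - gamma) / Gamma (1 - gamma) * sum_f_R0 (fun j => wgt gamma j r * df (x j)) r)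
  <= h ^ 2 * Mb / (8 * Gamma (2 - gamma)).
Proof.
intros Hdf. destruct RInt_integrand_cvg as [V HV].
assert (Hsum : sum_f_R0 (fun j => wgt gamma j r * df (x j)) r
               = sum_f_R0 (fun j => wgt gamma j r * f (x j)) r).
{ apply sum_eq. intros j Hj. rewrite Hdf; [reflexivity|].
  split; [apply grid_ge0 | apply grid_le_c, Hj]. }
destruct (is_RInt_gen_Gamma (1 - gamma) ltac:(lra)) as [_ HG1].
assert (HG2 : Gamma (2 - gamma) = (1 - gamma) * Gamma (1 - gamma))
  by (rewrite <- Gamma_succ by lra; f_equal; ring).
assert (Hpc : pw c (1 - gamma) <= 1).
{ apply (Rle_trans _ (pw 1 (1 - gamma)));
    [apply pw_le_compat_l; unfold c; lra | rewrite pw_1_l; lra]. }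
rewrite (caputo_eq_limit df V Hdf HV), Hsum, HG2, pw_pos by exact Hh.
set (G1 := Gamma (1 - gamma)) in *.
replace (/ G1 * V - Rpower h (1 - gamma) / G1 * sum_f_R0 (fun j => wgt gamma j r * f (x j)) r)
  with (/ G1 * (V - cells_sum r)) by (rewrite <- weighted_sum_cells_sum; field; lra).
rewrite Rabs_mult, Rabs_pos_eq by (left; apply Rinv_0_lt_compat, HG1).
apply (Rle_trans _ (/ G1 * (Mb * h ^ 2 / 8 * (1 / (1 - gamma))))); [| right; field; lra].
apply Rmult_le_compat_l; [left; apply Rinv_0_lt_compat, HG1|].
eapply Rle_trans; [apply limit_error, HV|].
apply Rmult_le_compat_l; [pose proof Mb_ge0; pose proof (pow2_ge_0 h); nra|].
unfold Rdiv. apply Rmult_le_compat_r; [left; apply Rinv_0_lt_compat; lra | exact Hpc].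
Qed.

End ProductIntegration.

Lemma time_node_bounds T M k : 0 < T -> (k <= M - 1)%nat -> (1 <= M)%nat ->
  0 <= INR (S k) * (T / INR M) <= T.
Proof.
intros HT Hk HM. assert (HMpos : 0 < INR M) by (apply lt_0_INR; lia).
assert (INR (S k) <= INR M) by (apply le_INR; lia). pose proof (pos_INR (S k)). split.
- apply Rmult_le_pos; [lra | apply Rdiv_le_0_compat; lra].
- replace T with (INR M * (T / INR M)) at 2 by (field; lra).
  apply Rmult_le_compat_r; [apply Rdiv_le_0_compat |]; lra.
Qed.

Lemma space_node_lt_1 N r : (r < N)%nat -> INR r * / INR N < 1.
Proof.
intros Hr. assert (HN : 0 < INR N) by (apply lt_0_INR; lia).
assert (INR r < INR N) by (apply lt_INR, Hr).
apply (Rmult_lt_reg_r (INR N)); [lra|]. rewrite Rmult_assoc, Rinv_l; lra.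
Qed.

Theorem theorem5p2 (T : R) (M N : nat) (u u1 u2 u3 : R -> R -> R) (gamma : R) (k : nat) :
  0 < T -> (1 <= M)%nat -> (1 <= N)%nat ->
  (forall t, 0 <= t <= T -> is_deriv_on 0 1 (fun x => u x t) (fun x => u1 x t)) ->
  (forall t, 0 <= t <= T -> is_deriv_on 0 1 (fun x => u1 x t) (fun x => u2 x t)) ->
  (forall t, 0 <= t <= T -> is_deriv_on 0 1 (fun x => u2 x t) (fun x => u3 x t)) ->
  continuous_on_Omega T u3 ->
  0 < gamma < 1 -> (k <= M - 1)%nat ->
  let tau := T / INR M in
  let h := / INR N in
  let tk1 := INR (S k) * tau in
  let nu := pw h (1 - gamma) / Gamma (1 - gamma) in
  let R_h := fun r : nat =>
    caputo gamma (fun x => u1 x tk1) (INR r * h)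
    - nu * sum_f_R0 (fun j => wgt gamma j r * u1 (INR j * h) tk1) r in
  forall r : nat, (1 <= r <= N - 1)%nat ->
    Rabs (R_h r) <= h ^ 2 * Mbar T u3 / (8 * Gamma (2 - gamma)).
Proof.
(* Only the derivatives u1, u2, u3 enter the estimate. *)
intros HT HM HN _ Hu1 Hu2 Hu3 Hg Hk tau h tk1 nu R_h r Hr.
assert (Htk : 0 <= tk1 <= T) by exact (time_node_bounds T M k HT Hk HM).
assert (Hh : 0 < h) by (apply Rinv_0_lt_compat, lt_0_INR; lia).
assert (Hrh : INR r * h < 1) by (apply space_node_lt_1; lia).
assert (Hagree : forall s, 0 <= s <= INR r * h -> u1 s tk1 = u1 (clamp01 s) tk1)
  by (intros s Hs; rewrite clamp01_id by lra; reflexivity).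
exact (caputo_error gamma (fun s => u1 (clamp01 s) tk1) (fun s => u2 s tk1) (fun s => u3 s tk1)
  (Mbar T u3) h r Hg (continuous_clamp01_comp _ _ (Hu1 tk1 Htk))
  (fun y Hy => is_derive_clamp01_comp _ _ y (Hu1 tk1 Htk) Hy)
  (fun y Hy => is_derive_of_is_deriv_on _ _ y (Hu2 tk1 Htk) Hy)
  (fun y Hy => Mbar_ub T u3 (Rlt_le _ _ HT) Hu3 y tk1 Hy Htk)
  Hh (proj1 Hr) Hrh (fun s => u1 s tk1) Hagree).
Qed.
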